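(* Let $\mathbf{A}=\langle A,\wedge,\vee,\cdot,1,0,{\sim},-,'\rangle$ be a quasi relation algebra. The set $C=\{a\in A\mid {\sim}a=-a\}$ is a subuniverse of $\mathbf{A}$ (closed under $\wedge,\vee,\cdot,{\sim},-,'$ and containing $0,1$), and the resulting subalgebra is a cyclic quasi relation algebra.
   Context: An FL-algebra $\langle A,\wedge,\vee,\cdot,1,\backslash,/,0\rangle$ is a residuated lattice (a lattice $\langle A,\wedge,\vee\rangle$, a monoid $\langle A,\cdot,1\rangle$, with $a\cdot b\le c \iff a\le c/b\iff b\le a\backslash c$) together with an arbitrary constant $0$. Define ${\sim}a=a\backslash 0$, $-a=0/a$ and $a+b={\sim}(-b\cdot -a)$. It is an InFL-algebra if ${\sim}{-}a={-}{\sim}a=a$ for all $a$. A quasi relation algebra (qRA) is an InFL-algebra with a unary operation $'$ such that for all $a,b$: $a''=a$, $(a\vee b)'=a'\wedge b'$, $({\sim}a)'=-(a')$, and $(a\cdot b)'=a'+b'$; it is written in the signature $\langle A,\wedge,\vee,\cdot,1,0,{\sim},-,'\rangle$. A qRA is cyclic if ${\sim}a=-a$ for all $a$. *)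

(* Operations of an FL-algebra with an extra unary operation ' (prime).
   ~ and - are the derived operations a\0 and 0/a. *)
Record qra_ops (A : Type) := QraOps {
  meet : A -> A -> A;
  join : A -> A -> A;
  mul  : A -> A -> A;
  one  : A;
  ldiv : A -> A -> A;
  rdiv : A -> A -> A;
  zero : A;
  prim : A -> A
}.
Arguments meet {A} _ _ _.
Arguments join {A} _ _ _.
Arguments mul {A} _ _ _.
Arguments one {A} _.
Arguments ldiv {A} _ _ _.
Arguments rdiv {A} _ _ _.
Arguments zero {A} _.
Arguments prim {A} _ _.

Section Q.
Context {A : Type} (o : qra_ops A).

Definition le (a b : A) : Prop := meet o a b = a.
Definition tneg (a : A) : A := ldiv o a (zero o).
Definition mneg (a : A) : A := rdiv o (zero o) a.
Definition plus (a b : A) : A := tneg (mul o (mneg b) (mneg a)).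

(* All FL/InFL/qRA axioms, with every universally quantified variable
   relativized to the predicate P.  With P := (fun _ => True) this is exactly
   the definition of a quasi relation algebra; for a subuniverse P it says
   that the subalgebra on P (with the restricted operations) is a qRA. *)
Definition is_qRA_on (P : A -> Prop) : Prop :=
  (forall a b c, P a -> P b -> P c -> meet o a (meet o b c) = meet o (meet o a b) c) /\
  (forall a b c, P a -> P b -> P c -> join o a (join o b c) = join o (join o a b) c) /\
  (forall a b, P a -> P b -> meet o a b = meet o b a) /\
  (forall a b, P a -> P b -> join o a b = join o b a) /\
  (forall a b, P a -> P b -> meet o a (join o a b) = a) /\
  (forall a b, P a -> P b -> join o a (meet o a b) = a) /\
  (forall a b c, P a -> P b -> P c -> mul o a (mul o b c) = mul o (mul o a b) c) /\
  (forall a, P a -> mul o (one o) a = a) /\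
  (forall a, P a -> mul o a (one o) = a) /\
  (forall a b c, P a -> P b -> P c ->
     (le (mul o a b) c <-> le a (rdiv o c b)) /\
     (le (mul o a b) c <-> le b (ldiv o a c))) /\
  (forall a, P a -> tneg (mneg a) = a /\ mneg (tneg a) = a) /\
  (forall a, P a -> prim o (prim o a) = a) /\
  (forall a b, P a -> P b -> prim o (join o a b) = meet o (prim o a) (prim o b)) /\
  (forall a, P a -> prim o (tneg a) = mneg (prim o a)) /\
  (forall a b, P a -> P b -> prim o (mul o a b) = plus (prim o a) (prim o b)).

Definition is_qRA : Prop := is_qRA_on (fun _ => True).

Definition cyclic_on (P : A -> Prop) : Prop := forall a, P a -> tneg a = mneg a.

Definition subuniverse (P : A -> Prop) : Prop :=
  (forall a b, P a -> P b -> P (meet o a b)) /\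
  (forall a b, P a -> P b -> P (join o a b)) /\
  (forall a b, P a -> P b -> P (mul o a b)) /\
  P (one o) /\ P (zero o) /\
  (forall a, P a -> P (tneg a)) /\
  (forall a, P a -> P (mneg a)) /\
  (forall a, P a -> P (prim o a)).

(* the residuals \ and / (term-definable in an InFL-algebra) also restrict *)
Definition closed_residuals (P : A -> Prop) : Prop :=
  (forall a b, P a -> P b -> P (ldiv o a b)) /\
  (forall a b, P a -> P b -> P (rdiv o a b)).

End Q.

(* The residuation laws make [x <= ~a] equivalent to [a x <= 0] and [x <= -a] to
   [x a <= 0], so [~a = -a] holds exactly when [a x <= 0] and [x a <= 0] are
   equivalent for all [x]; this two-sided annihilation property is preserved by
   products.  The De Morgan laws ~(a v b) = ~a ^ ~b and -(a v b) = -a ^ -b (and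
   their duals), ~1 = 0 = -1, (-a)' = ~(a'), a\b = ~((-b) a) and a/b = -(b (~a))
   give closure under the remaining operations.  The qRA axioms are universal, so
   they hold on every subset. *)
From Stdlib Require Import Setoid.

Lemma is_qRA_on_sub (A : Type) (o : qra_ops A) (P Q : A -> Prop) :
  (forall a, P a -> Q a) -> is_qRA_on o Q -> is_qRA_on o P.
Proof.
  unfold is_qRA_on; intros PQ HQ.
  repeat match goal with h : _ /\ _ |- _ => destruct h end.
  repeat match goal with |- _ /\ _ => split end;
    intros; match goal with h : _ |- _ => apply h; now auto end.
Qed.

Section QuasiRelationAlgebra.
Context {A : Type} (o : qra_ops A) (qra : is_qRA o).

Lemma meetA a b c : meet o a (meet o b c) = meet o (meet o a b) c.
Proof. destruct qra as (h&_). now apply h. Qed.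
Lemma joinA a b c : join o a (join o b c) = join o (join o a b) c.
Proof. destruct qra as (_&h&_). now apply h. Qed.
Lemma meetC a b : meet o a b = meet o b a.
Proof. destruct qra as (_&_&h&_). now apply h. Qed.
Lemma joinC a b : join o a b = join o b a.
Proof. destruct qra as (_&_&_&h&_). now apply h. Qed.
Lemma meet_absorb a b : meet o a (join o a b) = a.
Proof. destruct qra as (_&_&_&_&h&_). now apply h. Qed.
Lemma join_absorb a b : join o a (meet o a b) = a.
Proof. destruct qra as (_&_&_&_&_&h&_). now apply h. Qed.
Lemma mulA a b c : mul o a (mul o b c) = mul o (mul o a b) c.
Proof. destruct qra as (_&_&_&_&_&_&h&_). now apply h. Qed.
Lemma mul1r a : mul o (one o) a = a.
Proof. destruct qra as (_&_&_&_&_&_&_&h&_). now apply h. Qed.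
Lemma mulr1 a : mul o a (one o) = a.
Proof. destruct qra as (_&_&_&_&_&_&_&_&h&_). now apply h. Qed.
Lemma mul_le_rdiv a b c : le o (mul o a b) c <-> le o a (rdiv o c b).
Proof. destruct qra as (_&_&_&_&_&_&_&_&_&h&_). now apply h. Qed.
Lemma mul_le_ldiv a b c : le o (mul o a b) c <-> le o b (ldiv o a c).
Proof. destruct qra as (_&_&_&_&_&_&_&_&_&h&_). now apply h. Qed.
Lemma tneg_mneg a : tneg o (mneg o a) = a.
Proof. destruct qra as (_&_&_&_&_&_&_&_&_&_&h&_). now apply h. Qed.
Lemma mneg_tneg a : mneg o (tneg o a) = a.
Proof. destruct qra as (_&_&_&_&_&_&_&_&_&_&h&_). now apply h. Qed.
Lemma prim_tneg a : prim o (tneg o a) = mneg o (prim o a).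
Proof. destruct qra as (_&_&_&_&_&_&_&_&_&_&_&_&_&h&_). now apply h. Qed.

Lemma meetxx a : meet o a a = a.
Proof. rewrite <- (join_absorb a a) at 2. apply meet_absorb. Qed.
Lemma joinxx a : join o a a = a.
Proof. rewrite <- (meet_absorb a a) at 2. apply join_absorb. Qed.

Lemma le_refl a : le o a a.
Proof. apply meetxx. Qed.

Lemma le_anti a b : le o a b -> le o b a -> a = b.
Proof. unfold le; intros hab hba. rewrite <- hab at 1. now rewrite meetC. Qed.

Lemma le_indirect u v : (forall x, le o x u <-> le o x v) -> u = v.
Proof. intros h. apply le_anti; [apply h | apply <- h]; apply le_refl. Qed.

Lemma leEjoin a b : le o a b <-> join o a b = b.
Proof.
  unfold le; split; intros h.
  - now rewrite <- h, joinC, meetC, join_absorb.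
  - now rewrite <- h, meet_absorb.
Qed.

Lemma lexI x a b : le o x (meet o a b) <-> le o x a /\ le o x b.
Proof.
  unfold le; split.
  - intros h; split; rewrite <- h at 1.
    + now rewrite <- meetA, (meetC (meet o a b) a), (meetA a a b), meetxx.
    + now rewrite <- meetA, <- (meetA a b b), meetxx.
  - intros [ha hb]. now rewrite meetA, ha, hb.
Qed.

Lemma leUx a b y : le o (join o a b) y <-> le o a y /\ le o b y.
Proof.
  rewrite !leEjoin; split.
  - intros h; split; rewrite <- h at 1.
    + now rewrite joinA, joinA, joinxx.
    + now rewrite (joinC a b), joinA, joinA, joinxx, (joinC b a).
  - intros [ha hb]. now rewrite <- joinA, hb, ha.
Qed.

Lemma le_tneg x a : le o x (tneg o a) <-> le o (mul o a x) (zero o).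
Proof. symmetry; apply mul_le_ldiv. Qed.

Lemma le_mneg x a : le o x (mneg o a) <-> le o (mul o x a) (zero o).
Proof. symmetry; apply mul_le_rdiv. Qed.

Lemma ldivE a b : ldiv o a b = tneg o (mul o (mneg o b) a).
Proof.
  apply le_indirect; intros x.
  now rewrite le_tneg, <- mulA, <- le_tneg, tneg_mneg, <- mul_le_ldiv.
Qed.

Lemma rdivE a b : rdiv o a b = mneg o (mul o b (tneg o a)).
Proof.
  apply le_indirect; intros x.
  now rewrite le_mneg, mulA, <- le_mneg, mneg_tneg, <- mul_le_rdiv.
Qed.

Lemma tneg_join a b : tneg o (join o a b) = meet o (tneg o a) (tneg o b).
Proof.
  apply le_indirect; intros x.
  now rewrite lexI, !le_tneg, !mul_le_rdiv, leUx.
Qed.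

Lemma mneg_join a b : mneg o (join o a b) = meet o (mneg o a) (mneg o b).
Proof.
  apply le_indirect; intros x.
  now rewrite lexI, !le_mneg, !mul_le_ldiv, leUx.
Qed.

Lemma tneg_meet a b : tneg o (meet o a b) = join o (tneg o a) (tneg o b).
Proof.
  assert (e : meet o a b = mneg o (join o (tneg o a) (tneg o b)))
    by now rewrite mneg_join, !mneg_tneg.
  now rewrite e, tneg_mneg.
Qed.

Lemma mneg_meet a b : mneg o (meet o a b) = join o (mneg o a) (mneg o b).
Proof.
  assert (e : meet o a b = tneg o (join o (mneg o a) (mneg o b)))
    by now rewrite tneg_join, !tneg_mneg.
  now rewrite e, mneg_tneg.
Qed.

Lemma tneg_one : tneg o (one o) = zero o.
Proof. apply le_indirect; intros x. now rewrite le_tneg, mul1r. Qed.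

Lemma mneg_one : mneg o (one o) = zero o.
Proof. apply le_indirect; intros x. now rewrite le_mneg, mulr1. Qed.

Lemma tneg_zero : tneg o (zero o) = one o.
Proof. now rewrite <- mneg_one, tneg_mneg. Qed.

Lemma mneg_zero : mneg o (zero o) = one o.
Proof. now rewrite <- tneg_one, mneg_tneg. Qed.

Lemma prim_mneg a : prim o (mneg o a) = tneg o (prim o a).
Proof. now rewrite <- (tneg_mneg (prim o (mneg o a))), <- prim_tneg, tneg_mneg. Qed.

Definition cyclic_elt (a : A) : Prop := tneg o a = mneg o a.

Lemma cyclic_elt_iff a :
  cyclic_elt a <-> forall x, le o (mul o a x) (zero o) <-> le o (mul o x a) (zero o).
Proof.
  split.
  - intros ha x. now rewrite <- le_tneg, ha, le_mneg.
  - intros ha. apply le_indirect; intros x. now rewrite le_tneg, le_mneg.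
Qed.

Lemma cyclic_mul a b : cyclic_elt a -> cyclic_elt b -> cyclic_elt (mul o a b).
Proof.
  rewrite !cyclic_elt_iff; intros ha hb x.
  now rewrite <- mulA, ha, <- mulA, hb, !mulA.
Qed.

Lemma cyclic_join a b : cyclic_elt a -> cyclic_elt b -> cyclic_elt (join o a b).
Proof. unfold cyclic_elt; intros ha hb. now rewrite tneg_join, mneg_join, ha, hb. Qed.

Lemma cyclic_meet a b : cyclic_elt a -> cyclic_elt b -> cyclic_elt (meet o a b).
Proof. unfold cyclic_elt; intros ha hb. now rewrite tneg_meet, mneg_meet, ha, hb. Qed.

Lemma cyclic_one : cyclic_elt (one o).
Proof. unfold cyclic_elt. now rewrite tneg_one, mneg_one. Qed.

Lemma cyclic_zero : cyclic_elt (zero o).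
Proof. unfold cyclic_elt. now rewrite tneg_zero, mneg_zero. Qed.

Lemma cyclic_tneg a : cyclic_elt a -> cyclic_elt (tneg o a).
Proof. unfold cyclic_elt; intros ha. now rewrite mneg_tneg, ha, tneg_mneg. Qed.

Lemma cyclic_mneg a : cyclic_elt a -> cyclic_elt (mneg o a).
Proof. intros ha. rewrite <- ha. now apply cyclic_tneg. Qed.

Lemma cyclic_prim a : cyclic_elt a -> cyclic_elt (prim o a).
Proof. unfold cyclic_elt; intros ha. now rewrite <- prim_mneg, <- ha, prim_tneg. Qed.

Lemma cyclic_ldiv a b : cyclic_elt a -> cyclic_elt b -> cyclic_elt (ldiv o a b).
Proof.
  intros ha hb. rewrite ldivE.
  apply cyclic_tneg, cyclic_mul; [apply cyclic_mneg |]; assumption.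
Qed.

Lemma cyclic_rdiv a b : cyclic_elt a -> cyclic_elt b -> cyclic_elt (rdiv o a b).
Proof.
  intros ha hb. rewrite rdivE.
  apply cyclic_mneg, cyclic_mul; [| apply cyclic_tneg]; assumption.
Qed.

End QuasiRelationAlgebra.

Theorem proposition2p4 (A : Type) (o : qra_ops A) :
  is_qRA o ->
  let C := fun a : A => tneg o a = mneg o a in
  subuniverse o C /\ closed_residuals o C /\ is_qRA_on o C /\ cyclic_on o C.
Proof.
  intros qra; cbv zeta; fold (cyclic_elt o).
  split; [| split; [| split]].
  - repeat split; auto using cyclic_meet, cyclic_join, cyclic_mul, cyclic_one,
      cyclic_zero, cyclic_tneg, cyclic_mneg, cyclic_prim.
  - split; auto using cyclic_ldiv, cyclic_rdiv.
  - exact (is_qRA_on_sub A o _ _ (fun _ _ => I) qra).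
  - intros a ha; exact ha.
Qed.
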